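(* Let $\mathfrak g$ be a real Lie algebra, $r\in\mathfrak g\otimes\mathfrak g$, $\alpha=(r-r^t)/2$, $\beta=(r+r^t)/2$ (as maps $\mathfrak g^*\to\mathfrak g$), and suppose $\beta$ is invariant. Let $\hat{\mathfrak g}=\mathfrak g\otimes\mathbb C=\mathfrak g\oplus i\mathfrak g$ regarded as a real Lie algebra. The following are equivalent: (1) $r$ is a solution of the type II CYBE $[r_{12},r_{13}]+[r_{12},r_{23}]+[r_{13},r_{23}]=\frac12[r_{13}+r_{31},r_{23}+r_{32}]$; (2) $[\alpha(a^* ),\alpha(b^* )]-\alpha(\mathrm{ad}^*(\alpha(a^* ))b^*-\mathrm{ad}^*(\alpha(b^* ))a^* )=[\beta(a^* ),\beta(b^* )]$ for all $a^*,b^*\in\mathfrak g^*$; (3) for the sign $+$ and for the sign $-$, $(\alpha\pm i\beta)([a^*,b^*]_\delta)=[(\alpha\pm i\beta)(a^* ),(\alpha\pm i\beta)(b^* )]_{\hat{\mathfrak g}}$ for all $a^*,b^*\in\mathfrak g^*$, where $[a^*,b^*]_\delta=\mathrm{ad}^*(\alpha(a^* ))b^*-\mathrm{ad}^*(\alpha(b^* ))a^*$ and $(\alpha\pm i\beta)(a^* )=\alpha(a^* )\pm i\beta(a^* )\in\hat{\mathfrak g}$.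
   Context: $\mathfrak g$ finite-dimensional. $r\in\mathfrak g\otimes\mathfrak g$ is identified with $r:\mathfrak g^*\to\mathfrak g$ by $\langle r(a^* ),b^*\rangle=\langle a^*\otimes b^*,r\rangle$; $r^t$ is induced by $\sigma(r)$ with $\sigma(x\otimes y)=y\otimes x$. $\beta$ invariant means $(\mathrm{ad}(x)\otimes\mathrm{id}+\mathrm{id}\otimes\mathrm{ad}(x))\beta=0$ for all $x$. $\langle\mathrm{ad}^*(x)a^*,y\rangle=-\langle a^*,[x,y]\rangle$. For $r=\sum_i a_i\otimes b_i$: $[r_{12},r_{13}]=\sum[a_i,a_j]\otimes b_i\otimes b_j$, $[r_{12},r_{23}]=\sum a_i\otimes[b_i,a_j]\otimes b_j$, $[r_{13},r_{23}]=\sum a_i\otimes a_j\otimes[b_i,b_j]$; with $r+\sigma(r)=\sum_k c_k\otimes d_k$, $[r_{13}+r_{31},r_{23}+r_{32}]=\sum_{k,l}c_k\otimes c_l\otimes[d_k,d_l]$. The bracket of $\hat{\mathfrak g}$ is $[x+iy,x'+iy']=[x,x']-[y,y']+i([x,y']+[y,x'])$. *)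

(* A finite-dimensional real Lie algebra g of dimension n is
   presented by its structure constants c in a basis e_0..e_{n-1}:
   [e_i, e_j] = \sum_k c i j k e_k.  Elements of g and of gdual are row vectors
   of coordinates (in the basis e, resp. the dual basis of g^, i.e. e^ ).  Tensors in
   g (x) g are n x n matrices t (t = \sum_{p,q} t p q e_p (x) e_q), and tensors
   in g (x) g (x) g are finite functions on triples of indices. *)
From HB Require Import structures.
From mathcomp Require Import all_boot all_order all_algebra.
Set Implicit Arguments. Unset Strict Implicit. Unset Printing Implicit Defensive.
Import Order.TTheory GRing.Theory Num.Theory.
Local Open Scope ring_scope.

Section LieDefs.
Variables (R : realFieldType) (n : nat).

Definition strconst := 'I_n -> 'I_n -> 'I_n -> R.

Definition lieb (c : strconst) (x y : 'rV[R]_n) : 'rV[R]_n :=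
  \row_k \sum_i \sum_j x 0 i * y 0 j * c i j k.

Definition is_lie (c : strconst) : Prop :=
  (forall x, lieb c x x = 0) /\
  (forall x y z, lieb c x (lieb c y z) + lieb c y (lieb c z x)
                 + lieb c z (lieb c x y) = 0).

Definition ebase (i : 'I_n) : 'rV[R]_n := delta_mx 0 i.

Definition pairing (a x : 'rV[R]_n) : R := \sum_i a 0 i * x 0 i.

Definition adstar (c : strconst) (x a : 'rV[R]_n) : 'rV[R]_n :=
  \row_j - pairing a (lieb c x (ebase j)).

(* a tensor r identified with a map gdual -> g via <r(a), b> = <a (x) b, r> *)
Definition tmap (r : 'M[R]_n) (a : 'rV[R]_n) : 'rV[R]_n :=
  \row_j \sum_i a 0 i * r i j.

Definition alpha (r : 'M[R]_n) (a : 'rV[R]_n) : 'rV[R]_n :=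
  2^-1 *: (tmap r a - tmap r^T a).
Definition beta (r : 'M[R]_n) (a : 'rV[R]_n) : 'rV[R]_n :=
  2^-1 *: (tmap r a + tmap r^T a).
Definition betaT (r : 'M[R]_n) : 'M[R]_n := 2^-1 *: (r + r^T).

Definition tens2 (x y : 'rV[R]_n) : {ffun 'I_n * 'I_n -> R} :=
  [ffun t => x 0 t.1 * y 0 t.2].
Definition tens3 (x y z : 'rV[R]_n) : {ffun 'I_n * 'I_n * 'I_n -> R} :=
  [ffun t => x 0 t.1.1 * y 0 t.1.2 * z 0 t.2].

Definition ad_invariant (c : strconst) (t : 'M[R]_n) : Prop :=
  forall x : 'rV[R]_n,
    \sum_p \sum_q (tens2 (t p q *: lieb c x (ebase p)) (ebase q)
                   + tens2 (t p q *: ebase p) (lieb c x (ebase q))) = 0.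

(* Writing r = \sum_{p,q} a_{pq} (x) b_{pq} with a_{pq} = r p q e_p, b_{pq} = e_q *)
Definition r12_r13 (c : strconst) (r : 'M[R]_n) :=
  \sum_p \sum_q \sum_s \sum_t
    tens3 (lieb c (r p q *: ebase p) (r s t *: ebase s)) (ebase q) (ebase t).
Definition r12_r23 (c : strconst) (r : 'M[R]_n) :=
  \sum_p \sum_q \sum_s \sum_t
    tens3 (r p q *: ebase p) (lieb c (ebase q) (r s t *: ebase s)) (ebase t).
Definition r13_r23 (c : strconst) (r : 'M[R]_n) :=
  \sum_p \sum_q \sum_s \sum_t
    tens3 (r p q *: ebase p) (r s t *: ebase s) (lieb c (ebase q) (ebase t)).
(* [r13 + r31, r23 + r32] = \sum c_k (x) c_l (x) [d_k, d_l]
   where r + sigma(r) = \sum c_k (x) d_k *)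
Definition sym13_sym23 (c : strconst) (r : 'M[R]_n) :=
  let S := r + r^T in
  \sum_p \sum_q \sum_s \sum_t
    tens3 (S p q *: ebase p) (S s t *: ebase s) (lieb c (ebase q) (ebase t)).

Definition CYBE2 (c : strconst) (r : 'M[R]_n) : Prop :=
  r12_r13 c r + r12_r23 c r + r13_r23 c r
  = [ffun t => 2^-1 * sym13_sym23 c r t].

Definition brdelta (c : strconst) (r : 'M[R]_n) (a b : 'rV[R]_n) : 'rV[R]_n :=
  adstar c (alpha r a) b - adstar c (alpha r b) a.

(* the complexification ghat = g + i g as a real Lie algebra: pairs (x, y) = x + i y *)
Definition cbr (c : strconst) (u v : 'rV[R]_n * 'rV[R]_n) : 'rV[R]_n * 'rV[R]_n :=
  (lieb c u.1 v.1 - lieb c u.2 v.2, lieb c u.1 v.2 + lieb c u.2 v.1).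

Definition alpha_i_beta (r : 'M[R]_n) (s : R) (a : 'rV[R]_n) :=
  (alpha r a, s *: beta r a).

End LieDefs.

From HB Require Import structures.
From mathcomp Require Import all_boot all_order all_algebra.
From mathcomp Require Import ring lra.
Set Implicit Arguments. Unset Strict Implicit. Unset Printing Implicit Defensive.
Import Order.TTheory GRing.Theory Num.Theory.
Local Open Scope ring_scope.

(* Everything is reduced to coefficients in the basis e and its dual basis.
   Reading a matrix M as the map a |-> a *m M from gdual to g, brcoef M N x y z
   is the e_z-coefficient of [M(e^x), N(e^y)], and ybcoef M u v w is the
   coefficient of e_u (x) e_v (x) e_w in [M12,M13] + [M12,M23] + [M13,M23].
   Invariance of a tensor B says that B may be moved across a bracket at the
   cost of a sign (brcoef_invariant).  Splitting r = A + B into its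
   antisymmetric and symmetric parts, all mixed terms of ybcoef r cancel by
   invariance, so ybcoef r = ybcoef A + [B, B] (ybcoef_split) while the right
   side of the CYBE is 2 [B, B]; hence (1) reads ybcoef A = [B, B].  Statement
   (2) has exactly these coefficients, since for antisymmetric A the defect of
   a |-> a *m A being a Lie morphism has coefficients ybcoef A (ybcoef_mulmx).
   In (3) the real part is (2) and the imaginary part holds by invariance
   alone (beta_adstar), which gives the equivalence. *)

Section Coefficients.
Variables (R : realFieldType) (n : nat) (c : strconst R n).
Local Notation e := (@ebase R n).

Lemma coordZ (k : R) (x : 'rV[R]_n) j : (k *: x) 0 j = k * x 0 j.
Proof. exact: mxE. Qed.

Lemma coordB (x y : 'rV[R]_n) j : (x - y) 0 j = x 0 j - y 0 j.
Proof. by rewrite !mxE. Qed.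

Lemma ebaseE i j : e i 0 j = (i == j)%:R.
Proof. by rewrite mxE eqxx eq_sym. Qed.

Lemma sum_ebase (F : 'I_n -> R) i : \sum_j e i 0 j * F j = F i.
Proof.
rewrite (bigD1 i) //= ebaseE eqxx mul1r big1 ?addr0 // => j ji.
by rewrite ebaseE eq_sym (negbTE ji) mul0r.
Qed.

Lemma sum_ebase_sym (F : 'I_n -> R) i : \sum_j e j 0 i * F j = F i.
Proof. by rewrite -[RHS](sum_ebase F); apply: eq_bigr => j _; rewrite !ebaseE eq_sym. Qed.

Lemma sum_ebase2 (F : 'I_n -> 'I_n -> R) u v :
  \sum_i \sum_j e u 0 i * e v 0 j * F i j = F u v.
Proof.
rewrite -[RHS](sum_ebase (fun i => F i v) u); apply: eq_bigr => i _.
by rewrite -(sum_ebase (F i) v) mulr_sumr; apply: eq_bigr => j _; rewrite mulrA.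
Qed.

Lemma sum4_swap (F : 'I_n -> 'I_n -> 'I_n -> 'I_n -> R) :
  \sum_i \sum_j \sum_u \sum_v F i j u v = \sum_u \sum_v \sum_i \sum_j F i j u v.
Proof.
under eq_bigr => i _ do rewrite exchange_big.
rewrite exchange_big.
under eq_bigr => u _ do under eq_bigr => i _ do rewrite exchange_big.
by under eq_bigr => u _ do rewrite exchange_big.
Qed.

Lemma sum4_swap_outer (F : 'I_n -> 'I_n -> 'I_n -> 'I_n -> R) :
  \sum_i \sum_j \sum_k \sum_l F i j k l = \sum_l \sum_j \sum_k \sum_i F i j k l.
Proof.
under eq_bigr => i _ do under eq_bigr => j _ do rewrite exchange_big.
under eq_bigr => i _ do rewrite exchange_big.
rewrite exchange_big.
under eq_bigr => l _ do rewrite exchange_big.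
by under eq_bigr => l _ do under eq_bigr => j _ do rewrite exchange_big.
Qed.

Lemma lieb_ebase i j k : lieb c (e i) (e j) 0 k = c i j k.
Proof.
transitivity (\sum_p e i 0 p * \sum_q e j 0 q * c p q k); last by rewrite !sum_ebase.
rewrite mxE; apply: eq_bigr => p _; rewrite mulr_sumr; apply: eq_bigr => q _; by rewrite mulrA.
Qed.

Lemma lieb_ebase_r x j k : lieb c x (e j) 0 k = \sum_p x 0 p * c p j k.
Proof.
rewrite mxE; apply: eq_bigr => p _.
rewrite -[RHS](sum_ebase (fun q => x 0 p * c p q k) j).
by apply: eq_bigr => q _; rewrite mulrCA mulrA.
Qed.

Lemma liebZl k x y : lieb c (k *: x) y = k *: lieb c x y.
Proof.
apply/rowP => z; rewrite !mxE mulr_sumr; apply: eq_bigr => i _.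
by rewrite mulr_sumr; apply: eq_bigr => j _; rewrite !mxE !mulrA.
Qed.

Lemma liebZr k x y : lieb c x (k *: y) = k *: lieb c x y.
Proof.
apply/rowP => z; rewrite !mxE mulr_sumr; apply: eq_bigr => i _.
by rewrite mulr_sumr; apply: eq_bigr => j _; rewrite !mxE mulrCA !mulrA.
Qed.

Lemma liebDl x y z : lieb c (x + y) z = lieb c x z + lieb c y z.
Proof.
apply/rowP => k; rewrite !mxE -big_split; apply: eq_bigr => i _.
by rewrite -big_split; apply: eq_bigr => j _; rewrite !mxE !mulrDl.
Qed.

Lemma liebDr x y z : lieb c x (y + z) = lieb c x y + lieb c x z.
Proof.
apply/rowP => k; rewrite !mxE -big_split; apply: eq_bigr => i _.
by rewrite -big_split; apply: eq_bigr => j _; rewrite !mxE mulrDr mulrDl.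
Qed.

(* The coefficient of e_z in [M(e^x), N(e^y)], where a matrix M is read as the
   map a |-> a *m M from gdual to g. *)
Definition brcoef (M N : 'M[R]_n) (x y z : 'I_n) : R :=
  \sum_i \sum_j M x i * N y j * c i j z.

Lemma brcoefDl M1 M2 N x y z :
  brcoef (M1 + M2) N x y z = brcoef M1 N x y z + brcoef M2 N x y z.
Proof.
rewrite -big_split; apply: eq_bigr => i _; rewrite -big_split.
by apply: eq_bigr => j _; rewrite mxE !mulrDl.
Qed.

Lemma brcoefDr M N1 N2 x y z :
  brcoef M (N1 + N2) x y z = brcoef M N1 x y z + brcoef M N2 x y z.
Proof.
rewrite -big_split; apply: eq_bigr => i _; rewrite -big_split.
by apply: eq_bigr => j _; rewrite mxE mulrDr mulrDl.
Qed.

Lemma brcoefNl M N x y z : brcoef (- M) N x y z = - brcoef M N x y z.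
Proof.
rewrite -sumrN; apply: eq_bigr => i _; rewrite -sumrN.
by apply: eq_bigr => j _; rewrite mxE !mulNr.
Qed.

Lemma brcoefNr M N x y z : brcoef M (- N) x y z = - brcoef M N x y z.
Proof.
rewrite -sumrN; apply: eq_bigr => i _; rewrite -sumrN.
by apply: eq_bigr => j _; rewrite mxE mulrN mulNr.
Qed.

Lemma lieb_mulmx M N a b z :
  lieb c (a *m M) (b *m N) 0 z =
  \sum_u \sum_v a 0 u * b 0 v * brcoef M N u v z.
Proof.
transitivity (\sum_i \sum_j \sum_u \sum_v a 0 u * b 0 v * (M u i * N v j * c i j z)).
  rewrite mxE; apply: eq_bigr => i _; apply: eq_bigr => j _.
  rewrite !mxE mulr_suml mulr_suml; apply: eq_bigr => u _.
  by rewrite mulr_sumr mulr_suml; apply: eq_bigr => v _; ring.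
rewrite sum4_swap; apply: eq_bigr => u _; apply: eq_bigr => v _.
by rewrite mulr_sumr; apply: eq_bigr => i _; rewrite mulr_sumr.
Qed.

Lemma adstar_mulmx M N a b w :
  (adstar c (a *m M) b *m N) 0 w =
  - \sum_u \sum_v a 0 u * b 0 v * brcoef M N^T u w v.
Proof.
transitivity (- \sum_j \sum_v \sum_p \sum_u a 0 u * b 0 v * (M u p * N^T w j * c p j v)).
  rewrite mxE -sumrN; apply: eq_bigr => j _.
  rewrite !mxE /pairing mulNr mulr_suml; congr (- _); apply: eq_bigr => v _.
  rewrite lieb_ebase_r mulr_sumr mulr_suml; apply: eq_bigr => p _.
  rewrite mxE mulr_suml mulr_sumr mulr_suml; apply: eq_bigr => u _.
  by ring.
rewrite sum4_swap_outer; congr (- _); apply: eq_bigr => u _; apply: eq_bigr => v _.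
by rewrite mulr_sumr; apply: eq_bigr => p _; rewrite mulr_sumr.
Qed.

(* The coefficient of e_u (x) e_v (x) e_w in [M12,M13] + [M12,M23] + [M13,M23]
   (see the three lemmas below for the identification). *)
Definition ybcoef (M : 'M[R]_n) (u v w : 'I_n) : R :=
  brcoef M M u v w + brcoef M M^T u w v + brcoef M^T M^T v w u.

Lemma r12_r13_coef (r : 'M[R]_n) u v w :
  r12_r13 c r (u, v, w) = brcoef r^T r^T v w u.
Proof.
transitivity (\sum_p \sum_q e q 0 v * \sum_s \sum_t e t 0 w * (r p q * r s t * c p s u)).
  rewrite sum_ffunE; apply: eq_bigr => p _; rewrite sum_ffunE; apply: eq_bigr => q _.
  rewrite sum_ffunE mulr_sumr; apply: eq_bigr => s _; rewrite sum_ffunE mulr_sumr.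
  apply: eq_bigr => t _.
  by rewrite ffunE /= liebZl liebZr !coordZ lieb_ebase; ring.
apply: eq_bigr => p _; rewrite sum_ebase_sym; apply: eq_bigr => s _.
by rewrite sum_ebase_sym !mxE.
Qed.

Lemma r12_r23_coef (r : 'M[R]_n) u v w :
  r12_r23 c r (u, v, w) = brcoef r r^T u w v.
Proof.
transitivity (\sum_p e p 0 u * \sum_q \sum_s \sum_t e t 0 w * (r p q * r s t * c q s v)).
  rewrite sum_ffunE; apply: eq_bigr => p _; rewrite sum_ffunE mulr_sumr.
  apply: eq_bigr => q _; rewrite sum_ffunE mulr_sumr; apply: eq_bigr => s _.
  rewrite sum_ffunE !mulr_sumr; apply: eq_bigr => t _.
  by rewrite ffunE /= liebZr !coordZ lieb_ebase; ring.
rewrite sum_ebase_sym; apply: eq_bigr => q _; apply: eq_bigr => s _.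
by rewrite sum_ebase_sym !mxE.
Qed.

(* Also used for [r13 + r31, r23 + r32], with r + r^T in place of r. *)
Lemma r13_r23_coef (r : 'M[R]_n) u v w :
  (\sum_p \sum_q \sum_s \sum_t
     tens3 (r p q *: e p) (r s t *: e s) (lieb c (e q) (e t))) (u, v, w)
  = brcoef r r u v w.
Proof.
transitivity (\sum_p e p 0 u * \sum_q \sum_s e s 0 v * \sum_t r p q * r s t * c q t w).
  rewrite sum_ffunE; apply: eq_bigr => p _; rewrite sum_ffunE mulr_sumr.
  apply: eq_bigr => q _; rewrite sum_ffunE mulr_sumr; apply: eq_bigr => s _.
  rewrite sum_ffunE !mulr_sumr; apply: eq_bigr => t _.
  by rewrite ffunE /= !coordZ lieb_ebase; ring.
rewrite sum_ebase_sym; apply: eq_bigr => q _.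
by rewrite sum_ebase_sym.
Qed.

Lemma ybcoef_mulmx (M : 'M[R]_n) : M^T = - M -> forall a b w,
  (lieb c (a *m M) (b *m M)
     - (adstar c (a *m M) b - adstar c (b *m M) a) *m M) 0 w
  = \sum_u \sum_v a 0 u * b 0 v * ybcoef M u v w.
Proof.
move=> Manti a b w.
have swapped (F : 'I_n -> 'I_n -> R) :
    \sum_u \sum_v b 0 u * a 0 v * F u v = \sum_u \sum_v a 0 u * b 0 v * F v u.
  rewrite exchange_big; apply: eq_bigr => u _; apply: eq_bigr => v _.
  by rewrite (mulrC (b 0 v)).
have third x y z : brcoef M^T M^T x y z = - brcoef M M^T x y z.
  by rewrite {1}Manti brcoefNl.
rewrite mulmxBl !coordB lieb_mulmx !adstar_mulmx swapped.
under [RHS]eq_bigr => u _ do under eq_bigr => v _ do rewrite /ybcoef third !mulrDr mulrN.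
under [RHS]eq_bigr => u _ do rewrite !big_split sumrN.
by rewrite !big_split sumrN /=; ring.
Qed.

Lemma ad_invariant_coef (B : 'M[R]_n) : ad_invariant c B ->
  forall m u v, \sum_p B p v * c m p u + \sum_q B u q * c m q v = 0.
Proof.
move=> Binv m u v.
have := congr1 (fun t : {ffun 'I_n * 'I_n -> R} => t (u, v)) (Binv (e m)).
rewrite /= ffunE sum_ffunE => inv_uv; apply: etrans inv_uv.
have row_p p : (\sum_q (tens2 (B p q *: lieb c (e m) (e p)) (e q)
                     + tens2 (B p q *: e p) (lieb c (e m) (e q)))) (u, v)
    = B p v * c m p u + e p 0 u * \sum_q B p q * c m q v.
  transitivity (\sum_q (e q 0 v * (B p q * c m p u) + e p 0 u * (B p q * c m q v))).
    rewrite sum_ffunE; apply: eq_bigr => q _.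
    by rewrite !ffunE /= !coordZ !lieb_ebase; ring.
  by rewrite big_split /= sum_ebase_sym -mulr_sumr.
by rewrite (eq_bigr _ (fun p _ => row_p p)) big_split /= sum_ebase_sym.
Qed.

(* An invariant tensor B can be moved across the bracket at the cost of a
   sign; this is the only way invariance enters the proof. *)
Lemma brcoef_invariant (B N : 'M[R]_n) : ad_invariant c B ->
  forall x y z, brcoef N B x y z + brcoef N B^T x z y = 0.
Proof.
move=> Binv x y z; rewrite -big_split big1 // => i _ /=.
have factor (M : 'M[R]_n) y' z' :
    \sum_j N x i * M y' j * c i j z' = N x i * \sum_j M y' j * c i j z'.
  by rewrite mulr_sumr; apply: eq_bigr => j _; rewrite mulrA.
rewrite !factor -mulrDr addrC.
under [X in _ * (X + _)]eq_bigr => j _ do rewrite mxE.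
by rewrite ad_invariant_coef ?mulr0.
Qed.

Hypothesis lie : is_lie c.

(* The structure constants of a Lie algebra are antisymmetric (polarize
   [x, x] = 0 at x = e_i + e_j). *)
Lemma strconst_anti i j k : c j i k = - c i j k.
Proof.
have := lie.1 (e i + e j).
rewrite liebDl !liebDr !lie.1 add0r addr0 => /(congr1 (fun x : 'rV_n => x 0 k)).
by rewrite [LHS]mxE !lieb_ebase mxE => /eqP; rewrite addr_eq0 => /eqP ->; rewrite opprK.
Qed.

Lemma lieb_anti x y : lieb c y x = - lieb c x y.
Proof.
apply/rowP => k; rewrite [RHS]mxE !mxE exchange_big -sumrN; apply: eq_bigr => i _.
rewrite -sumrN; apply: eq_bigr => j _.
by rewrite (strconst_anti i j) mulrN (mulrC (y 0 j)).
Qed.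

Lemma brcoef_anti M N x y z : brcoef M N x y z = - brcoef N M y x z.
Proof.
rewrite /brcoef exchange_big -sumrN; apply: eq_bigr => j _.
rewrite -sumrN; apply: eq_bigr => i _.
by rewrite (strconst_anti i j) mulrN opprK (mulrC (N y j)).
Qed.

End Coefficients.

Section Decomposition.
Variables (R : realFieldType) (n : nat) (r : 'M[R]_n).

Definition alphaT : 'M[R]_n := 2^-1 *: (r - r^T).

Lemma tmap_mulmx (M : 'M[R]_n) a : tmap M a = a *m M.
Proof. by apply/rowP => j; rewrite !mxE. Qed.

Lemma alpha_mulmx a : alpha r a = a *m alphaT.
Proof. by rewrite /alpha !tmap_mulmx -mulmxBr scalemxAr. Qed.

Lemma beta_mulmx a : beta r a = a *m betaT r.
Proof. by rewrite /beta !tmap_mulmx -mulmxDr scalemxAr. Qed.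

Lemma alphaT_tr : alphaT^T = - alphaT.
Proof. by apply/matrixP => i j; rewrite !mxE; ring. Qed.

Lemma betaT_tr : (betaT r)^T = betaT r.
Proof. by apply/matrixP => i j; rewrite !mxE; ring. Qed.

Lemma r_split : r = alphaT + betaT r.
Proof. by apply/matrixP => i j; rewrite !mxE; field. Qed.

Lemma rT_split : r^T = betaT r - alphaT.
Proof. by apply/matrixP => i j; rewrite !mxE; field. Qed.

End Decomposition.

Section Corollary.
Variables (R : realFieldType) (n : nat) (c : strconst R n) (r : 'M[R]_n).
Hypotheses (lie : is_lie c) (inv : ad_invariant c (betaT r)).
Local Notation A := (alphaT r).
Local Notation B := (betaT r).

Lemma brcoef_beta N x y z : brcoef c N B x y z + brcoef c N B x z y = 0.
Proof. by rewrite -{2}betaT_tr brcoef_invariant. Qed.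

(* All mixed alpha-beta terms of the Yang-Baxter coefficients cancel. *)
Lemma ybcoef_split u v w : ybcoef c r u v w = ybcoef c A u v w + brcoef c B B u v w.
Proof.
rewrite /ybcoef alphaT_tr rT_split {1 2 3}(r_split r).
rewrite !(brcoefDl, brcoefDr, brcoefNl, brcoefNr).
have := brcoef_beta A u v w; have := brcoef_beta A v u w.
have := brcoef_beta A w u v; have := brcoef_beta B w u v.
rewrite !(brcoef_anti lie B A) (brcoef_anti lie B B u w v) (brcoef_anti lie B B v w u).
lra.
Qed.

(* The type II CYBE, read coefficientwise: the beta-beta part of the left side
   is half the right side, so the equation reduces to ybcoef A = [B, B]. *)
Lemma cybe2_coef :
  CYBE2 c r <-> forall u v w, ybcoef c A u v w = brcoef c B B u v w.
Proof.
have sym_split : r + r^T = B + B.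
  by rewrite rT_split {1}(r_split r) addrAC [alphaT r + _]addrC subrK.
have entry u v w : (r12_r13 c r + r12_r23 c r + r13_r23 c r) (u, v, w)
    - [ffun t => 2^-1 * sym13_sym23 c r t] (u, v, w)
    = ybcoef c A u v w - brcoef c B B u v w.
  rewrite !ffunE /sym13_sym23 /= r12_r13_coef r12_r23_coef !r13_r23_coef.
  have := ybcoef_split u v w; rewrite sym_split !(brcoefDl, brcoefDr) /ybcoef.
  lra.
split=> [cybe u v w | coef].
  by apply/eqP; rewrite -subr_eq0 -entry cybe subrr.
apply/ffunP => -[[u v] w]; apply/eqP; rewrite -subr_eq0 entry coef subrr //.
Qed.

Lemma alpha_defect_coef :
  (forall a b : 'rV[R]_n,
     lieb c (alpha r a) (alpha r b)
       - alpha r (adstar c (alpha r a) b - adstar c (alpha r b) a)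
     = lieb c (beta r a) (beta r b)) <->
  (forall u v w, ybcoef c A u v w = brcoef c B B u v w).
Proof.
have expand a b w : (lieb c (alpha r a) (alpha r b)
       - alpha r (adstar c (alpha r a) b - adstar c (alpha r b) a)) 0 w
    - lieb c (beta r a) (beta r b) 0 w
    = \sum_u \sum_v a 0 u * b 0 v * (ybcoef c A u v w - brcoef c B B u v w).
  rewrite !alpha_mulmx !beta_mulmx ybcoef_mulmx ?alphaT_tr // lieb_mulmx -sumrB.
  by apply: eq_bigr => u _; rewrite -sumrB; apply: eq_bigr => v _; rewrite mulrBr.
split=> [defect u v w | coef a b].
  apply/eqP; rewrite -subr_eq0.
  rewrite -(sum_ebase2 (fun i j => ybcoef c A i j w - brcoef c B B i j w)).
  by rewrite -expand defect subrr.
apply/rowP => w; apply/eqP; rewrite -subr_eq0 expand big1 // => u _.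
by rewrite big1 // => v _; rewrite coef subrr mulr0.
Qed.

(* Invariance of beta in operator form: beta o ad*(x) = ad(x) o beta.  This
   makes the imaginary part of statement (3) automatic. *)
Lemma beta_adstar x b : beta r (adstar c x b) = lieb c x (beta r b).
Proof.
rewrite !beta_mulmx; apply/rowP => w.
rewrite -[x]mulmx1 adstar_mulmx lieb_mulmx betaT_tr -sumrN; apply: eq_bigr => u _.
rewrite -sumrN; apply: eq_bigr => v _.
by move/eqP: (brcoef_beta 1%:M u v w); rewrite addr_eq0 => /eqP ->; rewrite mulrN.
Qed.

End Corollary.

Theorem corollary3p13 (R : realFieldType) (n : nat) (c : strconst R n)
  (r : 'M[R]_n) (Hlie : is_lie c) (Hinv : ad_invariant c (betaT r)) :
  [<-> CYBE2 c r;
       forall a b : 'rV[R]_n,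
         lieb c (alpha r a) (alpha r b)
           - alpha r (adstar c (alpha r a) b - adstar c (alpha r b) a)
         = lieb c (beta r a) (beta r b);
       forall s : R, (s = 1 \/ s = -1) ->
         forall a b : 'rV[R]_n,
           alpha_i_beta r s (brdelta c r a b)
           = cbr c (alpha_i_beta r s a) (alpha_i_beta r s b)].
Proof.
have beta_sub x y : beta r (x - y) = beta r x - beta r y.
  by rewrite !beta_mulmx mulmxBl.
tfae.
- by move/(cybe2_coef Hlie Hinv)/(alpha_defect_coef c r).
- move=> defect s s_sign a b.
  have s2 : s * s = 1 by case: s_sign => ->; rewrite ?mulrNN mulr1.
  rewrite /alpha_i_beta /cbr /=; congr (_, _).
    rewrite [lieb c (s *: _) _]liebZl [lieb c _ (s *: _)]liebZr scalerA s2 scale1r.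
    by rewrite -defect opprB addrC subrK.
  rewrite [lieb c (s *: _) _]liebZl [lieb c _ (s *: _)]liebZr -scalerDr /brdelta beta_sub !beta_adstar //.
  by rewrite (lieb_anti Hlie (alpha r b)).
- move=> complex; apply/(cybe2_coef Hlie Hinv)/(alpha_defect_coef c r) => a b.
  have := congr1 fst (complex 1 (or_introl erefl) a b).
  by rewrite /= !scale1r /brdelta => ->; rewrite opprB addrC subrK.
Qed.
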